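(* Let $M\ge 2$, let $k\in\{1,\dots,M\}$, and let $\mathbf V_1,\ldots,\mathbf V_M\in\mathbb C^{M\times M}$ be Hermitian positive definite matrices. For $\mathbf u\in\mathbb C^M$ and $\mathbf q\in\mathbb C^{M-1}$ define $$\mathbf T_k(\mathbf u,\mathbf q)=\mathbf I+\mathbf e_k(\mathbf u-\mathbf e_k)^{\mathsf H}+\bar{\mathbf E}_k\mathbf q^{*}\mathbf e_k^{\top},$$ $$\ell_2(\mathbf u,\mathbf q)=\sum_{m\neq k}(\mathbf e_m+q_m\mathbf e_k)^{\mathsf H}\mathbf V_m(\mathbf e_m+q_m\mathbf e_k)+\mathbf u^{\mathsf H}\mathbf V_k\mathbf u-2\log\left|\det\mathbf T_k(\mathbf u,\mathbf q)\right|,$$ and consider the problem $\min_{\mathbf u\in\mathbb C^M,\ \mathbf q\in\mathbb C^{M-1}}\ell_2(\mathbf u,\mathbf q)$. Then: (1) For a given $\mathbf q$, the optimal vector $\mathbf u^\star(\mathbf q)$ is $$\mathbf u^\star(\mathbf q)=\frac{\mathbf V_k^{-1}\tilde{\mathbf q}_k}{\sqrt{\tilde{\mathbf q}_k^{\mathsf H}\mathbf V_k^{-1}\tilde{\mathbf q}_k}}\,e^{j\theta},\qquad \tilde{\mathbf q}_k=\mathbf e_k-\bar{\mathbf E}_k\mathbf q^{*},$$ where $\theta\in[0,2\pi]$ is an arbitrary phase. (2) The optimal $\mathbf q^\star$ is the solution of $$\min_{\mathbf q\in\mathbb C^{M-1}}\ (\mathbf q+\mathbf A^{-1}\mathbf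 b)^{\mathsf H}\mathbf A(\mathbf q+\mathbf A^{-1}\mathbf b)-\log\!\left((\mathbf q-\mathbf C^{-1}\mathbf g)^{\mathsf H}\mathbf C(\mathbf q-\mathbf C^{-1}\mathbf g)+z\right),$$ where $\mathbf A=\operatorname{diag}(\mathbf e_k^\top\mathbf V_m\mathbf e_k)_{m\neq k}$, $\mathbf b=(\mathbf e_k^\top\mathbf V_m\mathbf e_m)_{m\neq k}\in\mathbb C^{M-1}$, $\mathbf C=\bar{\mathbf E}_k^\top(\mathbf V_k^{-1})^{*}\bar{\mathbf E}_k$, $\mathbf g=\bar{\mathbf E}_k^\top(\mathbf V_k^{-1})^{*}\mathbf e_k$, and $z=\mathbf e_k^\top(\mathbf V_k^{-1})^{*}\mathbf e_k-\mathbf g^{\mathsf H}\mathbf C^{-1}\mathbf g$.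
   Context: $\mathbf e_1,\dots,\mathbf e_M$ are the canonical basis vectors of $\mathbb C^M$, $\mathbf I$ is the $M\times M$ identity, and $\bar{\mathbf E}_k=[\mathbf e_1\ \cdots\ \mathbf e_{k-1}\ \mathbf e_{k+1}\ \cdots\ \mathbf e_M]$ is the $M\times(M-1)$ matrix of all canonical basis vectors except the $k$-th. The entries of $\mathbf q\in\mathbb C^{M-1}$ are indexed as $q_m$, $m\in\{1,\dots,M\}\setminus\{k\}$, in increasing order of $m$; vectors and diagonal matrices indexed by $m\neq k$ are ordered likewise. $\mathbf x^{*}$ denotes entrywise complex conjugation, $^{\mathsf H}$ conjugate transpose, $^\top$ transpose, and $j=\sqrt{-1}$. *)

From HB Require Import structures.
From mathcomp Require Import all_boot all_order all_algebra.
From mathcomp Require Import complex.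
From mathcomp Require Import all_classical all_reals all_analysis.

Set Implicit Arguments.
Unset Strict Implicit.
Unset Printing Implicit Defensive.

Import Order.TTheory GRing.Theory Num.Theory.
Local Open Scope ring_scope.

Section Defs.
Variable R : realType.
Local Notation C := R[i].

Definition ct (m p : nat) (A : 'M[C]_(m, p)) : 'M[C]_(p, m) := (map_mx Num.conj A)^T.
Definition cj (m p : nat) (A : 'M[C]_(m, p)) : 'M[C]_(m, p) := map_mx Num.conj A.

Definition hermitian (m : nat) (V : 'M[C]_m) : Prop := ct V = V.
Definition posdef (m : nat) (V : 'M[C]_m) : Prop :=
  hermitian V /\ forall x : 'cV[C]_m, x != 0 -> 0 < (ct x *m V *m x) 0 0.

Variable n : nat.  (* M = n.+1 *)

Definition e (i : 'I_n.+1) : 'cV[C]_n.+1 := delta_mx i 0.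
(* \bar E_k : all canonical basis vectors but the k-th, in increasing order *)
Definition Ebar (k : 'I_n.+1) : 'M[C]_(n.+1, n) :=
  \matrix_(i, j) (i == lift k j)%:R.

Definition Tk (k : 'I_n.+1) (u : 'cV[C]_n.+1) (q : 'cV[C]_n) : 'M[C]_n.+1 :=
  1%:M + e k *m ct (u - e k) + Ebar k *m cj q *m (e k)^T.

(* q_m (m <> k) is the entry  q (j) with m = lift k j *)
Definition ell2 (V : 'I_n.+1 -> 'M[C]_n.+1) (k : 'I_n.+1)
    (u : 'cV[C]_n.+1) (q : 'cV[C]_n) : R :=
  complex.Re ((\sum_(j < n)
         (ct (e (lift k j) + q j 0 *: e k) *m V (lift k j)
            *m (e (lift k j) + q j 0 *: e k)) 0 0)
      + (ct u *m V k *m u) 0 0)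
  - 2 * ln (complex.Re `|\det (Tk k u q)|).

(* the objective is +oo (log 0) when det T_k = 0: feasible domain *)
Definition feasible (k : 'I_n.+1) (u : 'cV[C]_n.+1) (q : 'cV[C]_n) : Prop :=
  \det (Tk k u q) != 0.

Definition qtilde (k : 'I_n.+1) (q : 'cV[C]_n) : 'cV[C]_n.+1 := e k - Ebar k *m cj q.

Definition expj (t : R) : C := Complex (cos t) (sin t).

Definition ustar (V : 'I_n.+1 -> 'M[C]_n.+1) (k : 'I_n.+1) (q : 'cV[C]_n) (t : R)
  : 'cV[C]_n.+1 :=
  ((sqrtC ((ct (qtilde k q) *m invmx (V k) *m qtilde k q) 0 0))^-1 * expj t)
    *: (invmx (V k) *m qtilde k q).

Definition Amx (V : 'I_n.+1 -> 'M[C]_n.+1) (k : 'I_n.+1) : 'M[C]_n :=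
  diag_mx (\row_j ((e k)^T *m V (lift k j) *m e k) 0 0).
Definition bvec (V : 'I_n.+1 -> 'M[C]_n.+1) (k : 'I_n.+1) : 'cV[C]_n :=
  \col_j ((e k)^T *m V (lift k j) *m e (lift k j)) 0 0.
Definition Cmx (V : 'I_n.+1 -> 'M[C]_n.+1) (k : 'I_n.+1) : 'M[C]_n :=
  (Ebar k)^T *m cj (invmx (V k)) *m Ebar k.
Definition gvec (V : 'I_n.+1 -> 'M[C]_n.+1) (k : 'I_n.+1) : 'cV[C]_n :=
  (Ebar k)^T *m cj (invmx (V k)) *m e k.
Definition zsc (V : 'I_n.+1 -> 'M[C]_n.+1) (k : 'I_n.+1) : C :=
  ((e k)^T *m cj (invmx (V k)) *m e k) 0 0
  - (ct (gvec V k) *m invmx (Cmx V k) *m gvec V k) 0 0.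

Definition fobj (V : 'I_n.+1 -> 'M[C]_n.+1) (k : 'I_n.+1) (q : 'cV[C]_n) : R :=
  let A := Amx V k in let b := bvec V k in
  let Cm := Cmx V k in let g := gvec V k in
  complex.Re ((ct (q + invmx A *m b) *m A *m (q + invmx A *m b)) 0 0)
  - ln (complex.Re ((ct (q - invmx Cm *m g) *m Cm *m (q - invmx Cm *m g)) 0 0 + zsc V k)).

End Defs.

From Pilot Require Import Defs.
From HB Require Import structures.
From mathcomp Require Import all_boot all_order all_algebra.
From mathcomp Require Import complex.
From mathcomp Require Import all_classical all_reals all_analysis.
From mathcomp Require Import ring lra.

(* By the rank-two determinant formula, det T_k(u, q) = u^H q~, so for fixed q
   the u-dependent part of l2 is  u^H V_k u - 2 log |u^H q~|.  Put
   w = q~^H V_k^-1 q~.  Cauchy-Schwarz in the inner product of V_k gives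
   |u^H q~|^2 / w <= u^H V_k u, and log y <= y - 1 (with equality iff y = 1)
   turns this into  u^H V_k u - 2 log |u^H q~| >= 1 - log w,  with equality
   exactly for u = e^{j theta} V_k^-1 q~ / sqrt w.  Hence
   min_u l2(u, q) = sum_{m <> k} (...) + 1 - log w(q).  Completing the square
   in each q_m (the diagonal A) and, for the conjugate of w(q), with respect to
   the compression C = Ebar^T (V_k^-1)^* Ebar, shows that the objective of (2)
   differs from this minimum by a constant. *)

Set Implicit Arguments.
Unset Strict Implicit.
Unset Printing Implicit Defensive.

Import Order.TTheory GRing.Theory Num.Theory.
Local Open Scope ring_scope.

Section Determinant.
Variable R : comPzRingType.

Lemma det_add1_mulmxC p r (A : 'M[R]_(p, r)) (B : 'M[R]_(r, p)) :
  \det (1%:M + A *m B) = \det (1%:M + B *m A).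
Proof.
have lfact : block_mx 1%:M (- A) B 1%:M =
    block_mx 1%:M 0 B 1%:M *m block_mx 1%:M (- A) 0 (1%:M + B *m A).
  by rewrite mulmx_block !mul1mx !mul0mx !mulmx1 !addr0 mulmxN addrCA addNr addr0.
have rfact : block_mx 1%:M (- A) B 1%:M =
    block_mx (1%:M + A *m B) (- A) 0 1%:M *m block_mx 1%:M 0 B 1%:M.
  by rewrite mulmx_block !mul1mx !mul0mx !mulmx1 mulmx0 mulNmx !add0r addrK.
have := congr1 determinant lfact; rewrite rfact !det_mulmx !det_lblock !det_ublock.
by rewrite !det1 !mul1r !mulr1.
Qed.

Lemma det_mx22 (A : 'M[R]_2) : \det A = A 0 0 * A 1 1 - A 0 1 * A 1 0.
Proof.
rewrite (expand_det_row _ 0) !big_ord_recl big_ord0 addr0 /cofactor !det_mx11.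
rewrite !mxE /= expr0 mul1r expr1 mulN1r mulrN.
by congr (A _ _ * A _ _ - A _ _ * A _ _); apply: val_inj.
Qed.

Lemma det_block_mx11 (x y z w : 'M[R]_1) :
  \det (block_mx x y z w) = x 0 0 * w 0 0 - y 0 0 * z 0 0.
Proof.
rewrite det_mx22 -(block_mxEul x y z w) -(block_mxEur x y z w).
rewrite -(block_mxEdl x y z w) -(block_mxEdr x y z w).
by congr (_ * _ - _ * _); congr (fun_of_matrix _ _ _); apply: val_inj.
Qed.

Lemma det_rank2_update p (a c : 'cV[R]_p) (b d : 'rV[R]_p) :
  \det (1%:M + a *m b + c *m d) =
  (1 + (b *m a) 0 0) * (1 + (d *m c) 0 0) - (b *m c) 0 0 * (d *m a) 0 0.
Proof.
rewrite -addrA -mul_row_col det_add1_mulmxC mul_col_row.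
by rewrite (scalar_mx_block 1 1 1) add_block_mx det_block_mx11 !mxE !add0r.
Qed.

End Determinant.

Section Adjoint.
Variable R : realType.
Local Notation C := R[i].
Implicit Types (m p r : nat).

Lemma Re_conj (z : C) : complex.Re z^* = complex.Re z.
Proof. by case: z. Qed.

Lemma ctE m p (A : 'M[C]_(m, p)) i j : ct A i j = (A j i)^*.
Proof. by rewrite !mxE. Qed.
Lemma cjE m p (A : 'M[C]_(m, p)) i j : cj A i j = (A i j)^*.
Proof. by rewrite !mxE. Qed.

Lemma ct_mul m p r (A : 'M[C]_(m, p)) (B : 'M[C]_(p, r)) : ct (A *m B) = ct B *m ct A.
Proof. by rewrite /ct map_mxM trmx_mul. Qed.
Lemma ctD m p (A B : 'M[C]_(m, p)) : ct (A + B) = ct A + ct B.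
Proof. by rewrite /ct map_mxD linearD. Qed.
Lemma ctB m p (A B : 'M[C]_(m, p)) : ct (A - B) = ct A - ct B.
Proof. by apply/matrixP=> i j; rewrite !mxE rmorphB. Qed.
Lemma ctZ m p c (A : 'M[C]_(m, p)) : ct (c *: A) = c^* *: ct A.
Proof. by apply/matrixP=> i j; rewrite !mxE rmorphM. Qed.
Lemma ctK m p (A : 'M[C]_(m, p)) : ct (ct A) = A.
Proof. by apply/matrixP=> i j; rewrite !mxE conjCK. Qed.
Lemma ct_inv m (A : 'M[C]_m) : ct (invmx A) = invmx (ct A).
Proof. by rewrite /ct (map_invmx (Num.conj : {rmorphism C -> C})) trmx_inv. Qed.
Lemma cj_mul m p r (A : 'M[C]_(m, p)) (B : 'M[C]_(p, r)) : cj (A *m B) = cj A *m cj B.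
Proof. by rewrite /cj map_mxM. Qed.
Lemma cj_ct m p (A : 'M[C]_(m, p)) : cj (ct A) = ct (cj A).
Proof. by apply/matrixP=> i j; rewrite !mxE. Qed.
Lemma cjB m p (A B : 'M[C]_(m, p)) : cj (A - B) = cj A - cj B.
Proof. by apply/matrixP=> i j; rewrite !mxE rmorphB. Qed.
Lemma cjK m p (A : 'M[C]_(m, p)) : cj (cj A) = A.
Proof. by apply/matrixP=> i j; rewrite !mxE conjCK. Qed.
Lemma cj_eq0 m p (A : 'M[C]_(m, p)) : (cj A == 0) = (A == 0).
Proof.
by apply/eqP/eqP => [hA|->]; [rewrite -[A]cjK hA | ]; apply/matrixP=> i j; rewrite !mxE conjC0.
Qed.

End Adjoint.

(* Locked so that [rewrite] and [ring] compare instances of [sesq] by their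
   arguments instead of unfolding the matrix products. *)
Definition sesq_def (R : realType) m (P : 'M[R[i]]_m) (x y : 'cV[R[i]]_m) : R[i] :=
  (ct x *m P *m y) 0 0.
Fact sesq_key : unit. Proof. by []. Qed.
Definition sesq := locked_with sesq_key sesq_def.
Canonical sesq_unlockable := [unlockable fun sesq].
Arguments sesq {R m}.

Lemma sesqE (R : realType) m (P : 'M[R[i]]_m) (x y : 'cV[R[i]]_m) :
  sesq P x y = (ct x *m P *m y) 0 0.
Proof. by rewrite unlock. Qed.

Section Sesquilinear.
Variable R : realType.
Local Notation C := R[i].
Variables (m : nat) (P : 'M[C]_m).
Implicit Types (x y z : 'cV[C]_m) (c : C).

Lemma sesqDl x y z : sesq P (x + y) z = sesq P x z + sesq P y z.
Proof. by rewrite !sesqE ctD !mulmxDl mxE. Qed.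
Lemma sesqDr x y z : sesq P x (y + z) = sesq P x y + sesq P x z.
Proof. by rewrite !sesqE mulmxDr mxE. Qed.
Lemma sesqZl c x y : sesq P (c *: x) y = c^* * sesq P x y.
Proof. by rewrite !sesqE ctZ -!scalemxAl mxE. Qed.
Lemma sesqZr c x y : sesq P x (c *: y) = c * sesq P x y.
Proof. by rewrite !sesqE -scalemxAr mxE. Qed.
Lemma sesqBl x y z : sesq P (x - y) z = sesq P x z - sesq P y z.
Proof. by rewrite sesqDl -scaleN1r sesqZl rmorphN1 mulN1r. Qed.
Lemma sesqBr x y z : sesq P x (y - z) = sesq P x y - sesq P x z.
Proof. by rewrite sesqDr -scaleN1r sesqZr mulN1r. Qed.

Lemma sesq_herm x y : Defs.hermitian P -> sesq P y x = (sesq P x y)^*.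
Proof. by move=> hP; rewrite !sesqE -ctE !ct_mul ctK hP mulmxA. Qed.

Lemma sesq_conj x y : (sesq P x y)^* = sesq (cj P) (cj x) (cj y).
Proof. by rewrite !sesqE -cjE !cj_mul cj_ct. Qed.

Lemma sesq_complete_square (g y : 'cV[C]_m) : Defs.hermitian P -> P \in unitmx ->
  sesq P (y - invmx P *m g) (y - invmx P *m g) =
  sesq P y y - (ct y *m g) 0 0 - (ct g *m y) 0 0 + sesq (invmx P) g g.
Proof.
move=> hP Pu; have Pg : sesq P y (invmx P *m g) = (ct y *m g) 0 0.
  by rewrite sesqE -mulmxA mulKVmx.
have PgPg : sesq P (invmx P *m g) (invmx P *m g) = sesq (invmx P) g g.
  by rewrite !sesqE ct_mul ct_inv hP mulmxKV // mulmxA.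
rewrite sesqBl !sesqBr (sesq_herm y (invmx P *m g) hP) PgPg Pg -ctE ct_mul ctK.
by ring.
Qed.

End Sesquilinear.

Lemma sesq_diag (R : realType) p (dv : 'rV[R[i]]_p) (y : 'cV[R[i]]_p) :
  sesq (diag_mx dv) y y = \sum_j (y j 0)^* * dv 0 j * y j 0.
Proof.
rewrite sesqE [LHS]mxE; apply: eq_bigr => j _.
rewrite [X in X * _]mxE (bigD1 j) //= big1 ?addr0 => [|l /negbTE lj].
  by rewrite !mxE eqxx mulr1n.
by rewrite !mxE lj mulr0n mulr0.
Qed.

Section Compression.
Variable R : realType.
Local Notation C := R[i].
Variables (m p : nat) (W : 'M[C]_m) (E : 'M[C]_(m, p)) (a : 'cV[C]_m).
Hypotheses (hW : Defs.hermitian W) (hQ : ct E *m W *m E \in unitmx).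
Local Notation Q := (ct E *m W *m E).
Local Notation g := (ct E *m W *m a).

Lemma sesq_compress_square (y : 'cV[C]_p) :
  sesq Q (y - invmx Q *m g) (y - invmx Q *m g) + (sesq W a a - sesq (invmx Q) g g)
  = sesq W (a - E *m y) (a - E *m y).
Proof.
have hQh : Defs.hermitian Q by rewrite /Defs.hermitian !ct_mul ctK hW mulmxA.
have ag : (ct g *m y) 0 0 = sesq W a (E *m y) by rewrite sesqE !ct_mul ctK hW !mulmxA.
have ga : (ct y *m g) 0 0 = sesq W (E *m y) a by rewrite sesqE ct_mul !mulmxA.
have QW : sesq Q y y = sesq W (E *m y) (E *m y) by rewrite !sesqE ct_mul !mulmxA.
rewrite sesq_complete_square // sesqBl !sesqBr ag ga QW.
by ring.
Qed.

End Compression.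

Section PositiveDefinite.
Variable R : realType.
Local Notation C := R[i].
Variables (m : nat) (P : 'M[C]_m).
Hypothesis hP : posdef P.

Lemma posdef_sesq_gt0 (x : 'cV[C]_m) : x != 0 -> 0 < sesq P x x.
Proof. by rewrite sesqE; apply: hP.2. Qed.

Lemma posdef_sesq_ge0 (x : 'cV[C]_m) : 0 <= sesq P x x.
Proof.
have [->|/posdef_sesq_gt0/ltW//] := eqVneq x 0.
by rewrite sesqE mulmx0 mxE.
Qed.

Lemma posdef_sesq_eq0 (x : 'cV[C]_m) : sesq P x x = 0 -> x = 0.
Proof. by move=> hx; apply/eqP/negPn/negP => /posdef_sesq_gt0; rewrite hx ltxx. Qed.

Lemma posdef_unit : P \in unitmx.
Proof.
rewrite unitmxE unitfE; apply/negP => /det0P [v v0 vP].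
have v0' : ct v = 0 by apply: posdef_sesq_eq0; rewrite sesqE ctK vP mul0mx mxE.
by move: v0; rewrite -(ctK v) v0' /ct map_mx0 trmx0 eqxx.
Qed.

Lemma posdef_inv : posdef (invmx P).
Proof.
split=> [|x x0]; first by rewrite /Defs.hermitian ct_inv hP.1.
have Px0 : invmx P *m x != 0.
  by apply: contra x0 => /eqP Px0; rewrite -[x](mulKVmx posdef_unit) Px0 mulmx0.
by have := hP.2 _ Px0; rewrite ct_mul ct_inv hP.1 -!mulmxA mulKVmx ?posdef_unit.
Qed.

Lemma posdef_cj : posdef (cj P).
Proof.
split=> [|x x0]; first by rewrite /Defs.hermitian -cj_ct hP.1.
have := posdef_sesq_gt0 (x := cj x); rewrite cj_eq0 => /(_ x0) h.
by rewrite -sesqE -[x]cjK -sesq_conj conj_Creal ?gtr0_real.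
Qed.

Lemma posdef_compress p (E : 'M[C]_(m, p)) :
  ct E *m E = 1%:M -> posdef (ct E *m P *m E).
Proof.
move=> EE; split=> [|x x0].
  by rewrite /Defs.hermitian !ct_mul ctK hP.1 mulmxA.
have Ex0 : E *m x != 0.
  by apply: contra x0 => /eqP Ex0; rewrite -[x]mul1mx -EE -mulmxA Ex0 mulmx0.
by have := hP.2 _ Ex0; rewrite ct_mul !mulmxA.
Qed.

End PositiveDefinite.

Section UnitCircle.
Variable R : realType.
Local Notation C := R[i].

Lemma expj_mulJ (t : R) : expj t * (expj t)^* = 1.
Proof.
rewrite /expj /=; apply/eqP; rewrite eq_complex /=; apply/andP; split; apply/eqP.
  by rewrite mulrN opprK -!expr2 cos2Dsin2.
by rewrite mulrN mulrC addNr.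
Qed.

Lemma expj_onto (z : C) : z * z^* = 1 -> exists2 t : R, 0 <= t <= 2 * pi & expj t = z.
Proof.
case: z => a b /= /eqP; rewrite eq_complex /= => /andP [/eqP ab1 _].
have a2b2 : a ^+ 2 + b ^+ 2 = 1 by rewrite !expr2; lra.
have a1 : -1 <= a <= 1 by apply/andP; split; nra.
have [/andP [acos0 acospi] cos_acos] := acos_def a1.
have sin_acos : sin (acos a) = `|b| by rewrite sin_acos // -a2b2 addrC addKr sqrtr_sqr.
have pi0 : 0 <= (pi : R) := pi_ge0 R.
have [b0|b0] := leP 0 b.
  exists (acos a); first by apply/andP; split => //; lra.
  by rewrite /expj cos_acos sin_acos ger0_norm.
exists (2 * pi - acos a); first by apply/andP; split; lra.
rewrite /expj cosB sinB (_ : 2 * pi = pi *+ 2) ?mulr_natl // cos2pi sin2pi.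
by rewrite cos_acos sin_acos ltr0_norm // !mul0r !mul1r addr0 sub0r !opprK.
Qed.

End UnitCircle.

Section Logarithm.
Variable R : realType.

Lemma ln_le_subr1 (y : R) : 0 < y -> ln y <= y - 1.
Proof. by move=> y0; have := expR_ge1Dx (ln y); rewrite lnK ?posrE // lerBrDl. Qed.

Lemma ln_eq_subr1 (y : R) : 0 < y -> ln y = y - 1 -> y = 1.
Proof.
move=> y0 hy; have [ln0|/expR_gt1Dx] := eqVneq (ln y) 0.
  by rewrite -[y]lnK ?posrE // ln0 expR0.
by rewrite lnK ?posrE // hy addrC subrK ltxx.
Qed.

End Logarithm.

Section CauchySchwarz.
Variable R : realType.
Local Notation C := R[i].
Variables (m : nat) (P : 'M[C]_m) (q : 'cV[C]_m).
Hypotheses (hP : posdef P) (q0 : q != 0).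
Implicit Types u : 'cV[C]_m.

Local Notation x := (invmx P *m q).
Local Notation w := (sesq (invmx P) q q).
Local Notation d u := ((ct u *m q) 0 0).

Lemma mulmx_solve : P *m x = q.
Proof. by rewrite mulKVmx // posdef_unit. Qed.

Lemma sesq_solve_r u : sesq P u x = d u.
Proof. by rewrite sesqE -mulmxA mulmx_solve. Qed.

Lemma sesq_solve_l u : sesq P x u = (d u)^*.
Proof. by rewrite (sesq_herm u x hP.1) sesq_solve_r. Qed.

Lemma sesq_solve : sesq P x x = w.
Proof. by rewrite sesq_solve_r sesqE ct_mul ct_inv hP.1. Qed.

Lemma solve_gt0 : 0 < w.
Proof. by apply: posdef_sesq_gt0 q0; apply: posdef_inv. Qed.

Lemma solve_conj : w^* = w.
Proof. exact/conj_Creal/gtr0_real/solve_gt0. Qed.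

Lemma solve_neq0 : w != 0.
Proof. exact/lt0r_neq0/solve_gt0. Qed.

Lemma sqrt_solve_conj : (sqrtC w)^* = sqrtC w.
Proof. by rewrite conj_Creal // ger0_real // sqrtC_ge0 ltW // solve_gt0. Qed.

Lemma sesq_sub_proj u : let c := (d u)^* / w in
  sesq P (u - c *: x) (u - c *: x) = sesq P u u - d u * (d u)^* / w.
Proof.
move=> c; have w0 := solve_neq0.
have cJ : c^* = d u / w by rewrite rmorphM /= conjCK fmorphV /= solve_conj.
rewrite sesqBl !sesqBr !sesqZl !sesqZr sesq_solve_r sesq_solve_l sesq_solve cJ /c.
by field.
Qed.

Lemma cauchy_schwarz u : d u * (d u)^* / w <= sesq P u u.
Proof. by rewrite -subr_ge0 -sesq_sub_proj posdef_sesq_ge0. Qed.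

Lemma cauchy_schwarz_eq u :
  sesq P u u = d u * (d u)^* / w -> u = ((d u)^* / w) *: x.
Proof.
move=> /eqP; rewrite -subr_eq0 -sesq_sub_proj => /eqP/(posdef_sesq_eq0 hP)/eqP.
by rewrite subr_eq0 => /eqP.
Qed.

Definition ucost u : R := complex.Re (sesq P u u) - 2 * ln (complex.Re `|d u|).

Lemma ucostE u : d u != 0 -> exists y : R,
  [/\ (y%:C)%C = d u * (d u)^* / w, 0 < y, y <= complex.Re (sesq P u u)
    & ucost u = complex.Re (sesq P u u) - ln y - ln (complex.Re w)].
Proof.
move=> du0; set s := complex.Re `|d u|; set W := complex.Re w.
have normE : `|d u| = (s%:C)%C by rewrite RRe_real // normr_real.
have wE : w = (W%:C)%C by rewrite RRe_real // gtr0_real // solve_gt0.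
have s0 : 0 < s by rewrite -ltcR -normE normr_gt0.
have W0 : 0 < W by rewrite -ltcR -wE solve_gt0.
have yE : ((s ^+ 2 / W)%:C)%C = d u * (d u)^* / w.
  by rewrite -normCK normE wE -rmorphXn -rmorphV ?unitfE ?lt0r_neq0 // -rmorphM.
exists (s ^+ 2 / W); split => //.
- by rewrite divr_gt0 // exprn_gt0.
- by rewrite -lecR RRe_real ?ger0_real ?posdef_sesq_ge0 // yE cauchy_schwarz.
rewrite ln_div ?posrE ?exprn_gt0 // lnXn // /ucost -/s.
by rewrite mulr2n mulrDl mul1r; lra.
Qed.

Lemma ucost_ge u : d u != 0 -> 1 - ln (complex.Re w) <= ucost u.
Proof.
move=> du0; have [y [_ y0 yA ->]] := ucostE du0.
by have := ln_le_subr1 y0; lra.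
Qed.

Lemma ucost_eq u : d u != 0 -> ucost u <= 1 - ln (complex.Re w) ->
  exists2 t : R, 0 <= t <= 2 * pi & u = ((sqrtC w)^-1 * expj t) *: x.
Proof.
move=> du0; have [y [yE y0 yA ->]] := ucostE du0; move=> hle.
have lny := ln_le_subr1 y0.
have y1 : y = 1 by apply: ln_eq_subr1 => //; lra.
have A1 : complex.Re (sesq P u u) = 1 by lra.
have ddw : d u * (d u)^* = w by apply: divr1_eq; rewrite -yE y1.
have uu1 : sesq P u u = 1 by rewrite -[LHS]RRe_real ?ger0_real ?posdef_sesq_ge0 // A1.
have [t t02 et] : exists2 t : R, 0 <= t <= 2 * pi & expj t = (d u)^* / sqrtC w.
  apply: expj_onto; rewrite rmorphM /= fmorphV /= conjCK sqrt_solve_conj mulrACA.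
  by rewrite -invfM -expr2 sqrtCK [_ * d u]mulrC ddw divff ?solve_neq0.
have uE : u = ((d u)^* / w) *: x.
  by apply: cauchy_schwarz_eq; rewrite uu1 ddw divff ?solve_neq0.
by exists t => //; rewrite {1}uE et mulrCA -invfM -expr2 sqrtCK.
Qed.

Lemma ucost_opt t : let u := ((sqrtC w)^-1 * expj t) *: x in
  d u != 0 /\ ucost u = 1 - ln (complex.Re w).
Proof.
set c := _ * expj t => u.
have ccJ : c^* * c = w^-1.
  rewrite rmorphM /= fmorphV /= sqrt_solve_conj mulrACA -invfM -expr2 sqrtCK.
  by rewrite [_^* * _]mulrC expj_mulJ mulr1.
clearbody c.
have du : d u = c^* * w by rewrite -sesq_solve_r sesqZl sesq_solve.
have uu1 : sesq P u u = 1.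
  by rewrite sesqZl sesqZr sesq_solve mulrA ccJ mulVf ?solve_neq0.
have ddw : d u * (d u)^* = w.
  rewrite du rmorphM /= conjCK solve_conj mulrACA ccJ.
  by rewrite mulrA mulVf ?solve_neq0 ?mul1r.
have du0 : d u != 0 by apply: contra solve_neq0 => /eqP du0; rewrite -ddw du0 mul0r.
split=> //; have [y [yE _ _ ->]] := ucostE du0.
have -> : y = 1 by apply/(@complexI R); rewrite yE ddw divff ?solve_neq0.
by rewrite uu1 ln1 subr0.
Qed.

End CauchySchwarz.

Section Basis.
Variable R : realType.
Local Notation C := R[i].
Variables (n : nat) (k : 'I_n.+1).
Local Notation e := (@e R n).
Local Notation Ebar := (@Ebar R n).

Lemma ct_e i : ct (e i) = (e i)^T.
Proof. by apply/matrixP=> a b; rewrite !mxE; case: (_ && _); rewrite ?conjC0 ?conjC1. Qed.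
Lemma cj_e i : cj (e i) = e i.
Proof. by apply/matrixP=> a b; rewrite !mxE; case: (_ && _); rewrite ?conjC0 ?conjC1. Qed.
Lemma ct_Ebar : ct (Ebar k) = (Ebar k)^T.
Proof. by apply/matrixP=> a b; rewrite !mxE; case: (_ == _); rewrite ?conjC0 ?conjC1. Qed.
Lemma cj_Ebar : cj (Ebar k) = Ebar k.
Proof. by apply/matrixP=> a b; rewrite !mxE; case: (_ == _); rewrite ?conjC0 ?conjC1. Qed.

Lemma sesq_e (P : 'M[C]_n.+1) i j : sesq P (e i) (e j) = P i j.
Proof. by rewrite sesqE ct_e /Defs.e trmx_delta -rowE -colE !mxE. Qed.

Lemma posdef_diag_gt0 (P : 'M[C]_n.+1) i : posdef P -> 0 < P i i.
Proof.
move=> hP; rewrite -sesq_e; apply: posdef_sesq_gt0 => //.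
apply/negP => /eqP /matrixP /(_ i 0) /eqP.
by rewrite !mxE !eqxx oner_eq0.
Qed.

Lemma tr_e_mul_e i : (e i)^T *m e i = 1%:M.
Proof.
by rewrite /Defs.e trmx_delta mul_delta_mx; apply/matrixP=> a b; rewrite !ord1 !mxE.
Qed.

Lemma tr_e_mul_Ebar : (e k)^T *m Ebar k = 0.
Proof.
apply/matrixP=> a b; rewrite !mxE big1 // => j _.
rewrite !mxE; have [->|_] := eqVneq j k; last by rewrite mul0r.
by rewrite eq_sym (negbTE (neq_lift k b)) mulr0.
Qed.

Lemma ct_Ebar_mul_Ebar : ct (Ebar k) *m Ebar k = 1%:M.
Proof.
apply/matrixP=> a b; rewrite ct_Ebar !mxE (bigD1 (lift k a)) //= big1 => [|j ja].
  by rewrite !mxE eqxx mul1r addr0 (inj_eq (@lift_inj _ k)).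
by rewrite !mxE (negbTE ja) mul0r.
Qed.

Lemma qtilde_neq0 (q : 'cV[C]_n) : qtilde k q != 0.
Proof.
apply/eqP => /matrixP /(_ k 0) /eqP; rewrite !mxE eqxx big1 ?subr0 ?oner_eq0 // => j _.
by rewrite !mxE (negbTE (neq_lift k j)) mul0r.
Qed.

Lemma det_Tk (u : 'cV[C]_n.+1) (q : 'cV[C]_n) : \det (Tk k u q) = (ct u *m qtilde k q) 0 0.
Proof.
rewrite /Tk det_rank2_update [(e k)^T *m _]mulmxA tr_e_mul_Ebar mul0mx tr_e_mul_e.
rewrite /qtilde mulmxBr ctB ct_e !mulmxBl tr_e_mul_e.
rewrite [(e k)^T *m _]mulmxA tr_e_mul_Ebar mul0mx.
by rewrite !mxE /=; ring.
Qed.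

End Basis.

Section Objective.
Variable R : realType.
Local Notation C := R[i].
Variables (n : nat) (k : 'I_n.+1) (V : 'I_n.+1 -> 'M[C]_n.+1).
Hypothesis hV : forall m, posdef (V m).
Local Notation e := (@e R n).
Local Notation Ebar := (@Ebar R n).
Implicit Types (u : 'cV[C]_n.+1) (q : 'cV[C]_n).

Definition ell2_sum q : C :=
  \sum_(j < n) sesq (V (lift k j)) (e (lift k j) + q j 0 *: e k) (e (lift k j) + q j 0 *: e k).

Definition qtilde_sesq q : C := sesq (invmx (V k)) (qtilde k q) (qtilde k q).

Definition ell2_umin q : R := complex.Re (ell2_sum q) + (1 - ln (complex.Re (qtilde_sesq q))).

Lemma feasibleE u q : feasible k u q <-> (ct u *m qtilde k q) 0 0 != 0.
Proof. by rewrite /feasible det_Tk. Qed.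

Lemma ell2E u q : ell2 V k u q = complex.Re (ell2_sum q) + ucost (V k) (qtilde k q) u.
Proof.
rewrite /ell2 det_Tk /ucost /ell2_sum sesqE raddfD addrA.
by congr (complex.Re _ + _ - _); apply: eq_bigr => j _; rewrite sesqE.
Qed.

Lemma ell2_ge_umin u q : feasible k u q -> ell2_umin q <= ell2 V k u q.
Proof. by move=> /feasibleE du0; rewrite ell2E lerD2l ucost_ge ?qtilde_neq0. Qed.

Lemma ell2_ustar q t :
  feasible k (ustar V k q t) q /\ ell2 V k (ustar V k q t) q = ell2_umin q.
Proof.
rewrite feasibleE ell2E /ustar -sesqE.
by have [du0 ->] := ucost_opt (hV k) (qtilde_neq0 k q) t.
Qed.

Lemma ell2_le_umin u q : feasible k u q -> ell2 V k u q <= ell2_umin q ->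
  exists2 t : R, 0 <= t <= 2 * pi & u = ustar V k q t.
Proof.
move=> /feasibleE du0; rewrite ell2E lerD2l /ustar -sesqE.
by apply: ucost_eq; rewrite ?qtilde_neq0.
Qed.

Lemma Amx_square : exists K : C, forall q,
  sesq (Amx V k) (q + invmx (Amx V k) *m bvec V k) (q + invmx (Amx V k) *m bvec V k)
  = ell2_sum q + K.
Proof.
pose a j := V (lift k j) k k; pose b j := V (lift k j) k (lift k j).
have a0 j : a j != 0 by rewrite lt0r_neq0 // posdef_diag_gt0.
have AE : Amx V k = diag_mx (\row_j a j).
  by congr diag_mx; apply/rowP => j; rewrite [LHS]mxE [RHS]mxE -ct_e -sesqE sesq_e.
have bE : invmx (Amx V k) *m bvec V k = \col_j (b j / a j).
  apply: (canLR (mulKmx _)).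
    by rewrite unitmxE AE det_diag unitfE; apply/prodf_neq0 => j _; rewrite mxE.
  apply/colP => j; rewrite AE mul_diag_mx [LHS]mxE [RHS]mxE [in RHS]mxE -ct_e -sesqE sesq_e.
  by rewrite mxE mulrC divfK.
exists (\sum_j ((b j)^* * b j / a j - V (lift k j) (lift k j) (lift k j))) => q.
rewrite bE AE sesq_diag /ell2_sum -big_split; apply: eq_bigr => j _ /=.
rewrite sesqDl !sesqDr !sesqZl !sesqZr !sesq_e !mxE.
have Vmk : V (lift k j) (lift k j) k = (b j)^* by rewrite /b -ctE (hV _).1.
have aJ : (a j)^* = a j by rewrite conj_Creal // gtr0_real // posdef_diag_gt0.
rewrite Vmk -/(a j) -/(b j) rmorphD rmorphM /= fmorphV /= aJ.
by field.
Qed.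

Lemma Cmx_square q :
  sesq (Cmx V k) (q - invmx (Cmx V k) *m gvec V k) (q - invmx (Cmx V k) *m gvec V k)
  + zsc V k = (qtilde_sesq q)^*.
Proof.
have hW : posdef (cj (invmx (V k))) := posdef_cj (posdef_inv (hV k)).
have hCmx : posdef (Cmx V k).
  by rewrite /Cmx -ct_Ebar; apply: posdef_compress; rewrite ?ct_Ebar_mul_Ebar.
rewrite /qtilde_sesq sesq_conj /qtilde cjB cj_e cj_mul cj_Ebar cjK.
move: hCmx; rewrite /zsc /Cmx /gvec -ct_Ebar -ct_e -!sesqE => hCmx.
exact/sesq_compress_square/posdef_unit/hCmx/hW.1.
Qed.

Lemma fobjE : exists K : R, forall q, fobj V k q = ell2_umin q + K.
Proof.
have [K AK] := Amx_square; exists (complex.Re K - 1) => q.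
by rewrite /fobj /= -!sesqE AK Cmx_square Re_conj raddfD /ell2_umin; lra.
Qed.

Lemma ell2_argmin_u q u :
  (feasible k u q /\ forall u', feasible k u' q -> ell2 V k u q <= ell2 V k u' q)
  <-> exists t : R, 0 <= t <= 2 * pi /\ u = ustar V k q t.
Proof.
split=> [[u_feas u_min]|[t [_ ->]]].
  have [ustar_feas ustar_umin] := ell2_ustar q 0.
  have := u_min _ ustar_feas; rewrite ustar_umin => /(ell2_le_umin u_feas) [t t02 ->].
  by exists t.
have [ut_feas ut_umin] := ell2_ustar q t.
split; first exact: ut_feas.
by move=> u' /ell2_ge_umin; rewrite ut_umin.
Qed.

Lemma ell2_argmin_q_fobj q :
  (exists u, feasible k u q /\
     forall u' q', feasible k u' q' -> ell2 V k u q <= ell2 V k u' q')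
  <-> (forall q', fobj V k q <= fobj V k q').
Proof.
have [K fobjK] := fobjE.
have umin_le q' : (ell2_umin q <= ell2_umin q') = (fobj V k q <= fobj V k q').
  by rewrite !fobjK (lerD2r K).
split=> [[u [u_feas u_min]] q'|fobj_min].
  rewrite -umin_le; have [ustar_feas <-] := ell2_ustar q' 0.
  exact: le_trans (ell2_ge_umin u_feas) (u_min _ _ ustar_feas).
have [ustar_feas ustar_umin] := ell2_ustar q 0.
exists (ustar V k q 0); split; first exact: ustar_feas.
move=> u' q' /ell2_ge_umin; rewrite ustar_umin; apply: le_trans.
by rewrite umin_le fobj_min.
Qed.

End Objective.

Theorem theorem1 (R : realType) (n : nat) (hn : (1 <= n)%N) (k : 'I_n.+1)
    (V : 'I_n.+1 -> 'M[R[i]]_n.+1) (hV : forall m, posdef (V m)) :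
  (forall (q : 'cV[R[i]]_n) (u : 'cV[R[i]]_n.+1),
     (feasible k u q /\
      forall u', feasible k u' q -> ell2 V k u q <= ell2 V k u' q)
     <-> exists t : R, 0 <= t <= 2 * pi /\ u = ustar V k q t)
  /\
  (forall q : 'cV[R[i]]_n,
     (exists u, feasible k u q /\
        forall u' q', feasible k u' q' -> ell2 V k u q <= ell2 V k u' q')
     <-> (forall q', fobj V k q <= fobj V k q')).
Proof.
by split=> [q u | q]; [exact: (ell2_argmin_u k hV) | exact: (ell2_argmin_q_fobj k hV)].
Qed.
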